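(* There exist two players with additive valuations over a finite set of goods (where some single goods may have value $0$ to a player) such that no allocation is both EFX and Pareto optimal.
   Context: A valuation is a function $v:2^M\to\mathbb{R}_{\ge0}$ with $v(\emptyset)=0$ that is monotone: $v(S)\le v(T)$ whenever $S\subseteq T$. It is additive if $v(S)=\sum_{g\in S}v(\{g\})$ for all $S\subseteq M$. An allocation is an ordered partition $(A_1,\dots,A_n)$ of $M$; parts may be empty. It is EFX if for all players $i,j$ and every $g\in A_j$ we have $v_i(A_i)\ge v_i(A_j\setminus\{g\})$. It is Pareto optimal (PO) if there is no allocation $B$ with $v_i(B_i)\ge v_i(A_i)$ for all $i$ and $v_j(B_j)>v_j(A_j)$ for some $j$. *)

From HB Require Import structures.
From mathcomp Require Import all_boot all_order all_algebra.
Set Implicit Arguments. Unset Strict Implicit. Unset Printing Implicit Defensive.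
Import Order.TTheory GRing.Theory Num.Theory.
Local Open Scope ring_scope.

Definition is_valuation (R : realFieldType) (M : finType) (v : {set M} -> R) : Prop :=
  [/\ v set0 = 0,
      (forall S : {set M}, 0 <= v S) &
      (forall S T : {set M}, S \subset T -> v S <= v T)].

Definition is_additive (R : realFieldType) (M : finType) (v : {set M} -> R) : Prop :=
  forall S : {set M}, v S = \sum_(g in S) v [set g].

(* An allocation (A_1,...,A_n), an ordered partition of M with possibly
   empty parts, is represented by the assignment A : M -> 'I_n of goods to
   players; bundle i is [set g | A g == i]. *)
Definition bundle (M : finType) (n : nat) (A : {ffun M -> 'I_n}) (i : 'I_n) : {set M} :=
  [set g | A g == i].

Definition EFX (R : realFieldType) (M : finType) (n : nat)
  (v : 'I_n -> {set M} -> R) (A : {ffun M -> 'I_n}) : Prop :=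
  forall i j : 'I_n, forall g, g \in bundle A j ->
    v i (bundle A j :\ g) <= v i (bundle A i).

Definition PO (R : realFieldType) (M : finType) (n : nat)
  (v : 'I_n -> {set M} -> R) (A : {ffun M -> 'I_n}) : Prop :=
  ~ exists B : {ffun M -> 'I_n},
      (forall i, v i (bundle A i) <= v i (bundle B i)) /\
      (exists j, v j (bundle A j) < v j (bundle B j)).

From HB Require Import structures.
From mathcomp Require Import all_boot all_order all_algebra.
Set Implicit Arguments. Unset Strict Implicit. Unset Printing Implicit Defensive.
Import Order.TTheory GRing.Theory Num.Theory.
Local Open Scope ring_scope.

(* Take goods a_0, a_1, c, where a_i is worthless to player i and worth 1 to
   the other player, and c is worth 2 to both.  Pareto optimality forces each
   a_i to go to the player who values it, since handing it over costs the
   owner nothing.  Whoever then receives c holds {a_j, c} against the other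
   player j's {a_i}: even after dropping a_j, player j values that bundle at 2,
   more than the 1 of her own, so the allocation is not EFX. *)

Section AdditiveValuation.
Variables (R : realFieldType) (M : finType).

Definition additive_valuation (w : M -> R) (S : {set M}) : R := \sum_(g in S) w g.

Variable w : M -> R.
Hypothesis w_ge0 : forall g, 0 <= w g.

Lemma additive_valuationP :
  is_valuation (additive_valuation w) /\ is_additive (additive_valuation w).
Proof.
split; first split.
- exact: big_set0.
- by move=> S; apply: sumr_ge0.
- move=> S T sST; rewrite /additive_valuation [leRHS](big_setID S) /=.
  by rewrite (setIidPr sST) lerDl sumr_ge0.
- by move=> S; apply: eq_bigr => g _; rewrite /additive_valuation big_set1.
Qed.

Lemma weight_le_additive_valuation (S : {set M}) g :
  g \in S -> w g <= additive_valuation w S.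
Proof. by move=> Sg; rewrite /additive_valuation (bigD1 g) //= lerDl sumr_ge0. Qed.

Lemma additive_valuation_bundle n (A : {ffun M -> 'I_n}) k :
  additive_valuation w (bundle A k) = \sum_g (if A g == k then w g else 0).
Proof. by rewrite /additive_valuation big_mkcond; apply: eq_bigr => g _; rewrite inE. Qed.

End AdditiveValuation.

Section ParetoOptimality.
Variables (R : realFieldType) (M : finType) (n : nat) (w : 'I_n -> M -> R).

Let v k := additive_valuation (w k).

(* Reassigning such a good from [i] to [j] is a Pareto improvement. *)
Lemma PO_worthless_good (A : {ffun M -> 'I_n}) g i j :
  i != j -> w i g = 0 -> 0 < w j g -> PO v A -> A g != i.
Proof.
move=> neq_ij wig0 wjg_gt0 poA; apply/negP => /eqP Agi; apply: poA.
pose B := [ffun x => if x == g then j else A x].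
have share_le k x :
    (if A x == k then w k x else 0) <= (if B x == k then w k x else 0).
  rewrite ffunE; have [->|_] := eqVneq x g; last exact: lexx.
  rewrite Agi; have [<-|_] := eqVneq i k.
    by rewrite eq_sym (negbTE neq_ij) wig0.
  by case: eqP => [<-|_]; [exact: ltW | exact: lexx].
exists B; split=> [k|]; rewrite /v.
  by rewrite !additive_valuation_bundle; apply: ler_sum => x _.
exists j; rewrite !additive_valuation_bundle (bigD1 g) // [ltRHS](bigD1 g) //=.
apply: ltr_leD; last by apply: ler_sum => x _.
by rewrite ffunE eqxx Agi (negbTE neq_ij) eqxx.
Qed.

End ParetoOptimality.

Lemma ord2_neq_rev (i k : 'I_2) : (k != i) = (k == rev_ord i).
Proof. by case: i k => [[|[|//]] ?] [[|[|//]] ?]. Qed.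

Lemma ord2_rev_neq (i : 'I_2) : rev_ord i != i.
Proof. by rewrite ord2_neq_rev. Qed.

Section Counterexample.
Variable R : realFieldType.

(* [Some i] is the good worthless to player [i]; [None] is the shared good. *)
Definition weight (i : 'I_2) (g : option 'I_2) : R :=
  if g is Some k then (k != i)%:R else 2.

Lemma weight_ge0 i g : 0 <= weight i g.
Proof. by case: g. Qed.

Let v i := additive_valuation (weight i).

Lemma PO_worthless_to_other (A : {ffun option 'I_2 -> 'I_2}) k :
  PO v A -> A (Some k) = rev_ord k.
Proof.
have neq_rev : k != rev_ord k by rewrite eq_sym ord2_rev_neq.
move=> poA; apply/eqP; rewrite -ord2_neq_rev.
apply: (PO_worthless_good neq_rev _ _ poA).
  by rewrite /weight eqxx.
by rewrite /weight neq_rev ltr01.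
Qed.

End Counterexample.

Theorem theorem5p1 (R : realFieldType) :
  exists (M : finType) (v : 'I_2 -> {set M} -> R),
    (forall i, is_valuation (v i) /\ is_additive (v i)) /\
    (forall A : {ffun M -> 'I_2}, ~ (EFX v A /\ PO v A)).
Proof.
exists (option 'I_2 : finType), (fun i => additive_valuation (weight R i)).
split=> [i | A [efxA poA]]; first exact/additive_valuationP/weight_ge0.
have A_Some k : A (Some k) = rev_ord k := PO_worthless_to_other k poA.
set i := A None; set j := rev_ord i.
have bundle_j : bundle A j = [set Some i].
  apply/setP => -[k|]; rewrite !inE; last by rewrite eq_sym (negbTE (ord2_rev_neq i)).
  by rewrite A_Some (inj_eq rev_ord_inj).
have Aj_in_i : Some j \in bundle A i by rewrite inE A_Some rev_ordK.
have None_in : None \in bundle A i :\ Some j by rewrite !inE eqxx.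
have := efxA j i _ Aj_in_i; rewrite bundle_j /additive_valuation big_set1.
move/(le_trans (weight_le_additive_valuation (@weight_ge0 R j) None_in)).
by rewrite /weight eq_sym ord2_rev_neq ler_nat.
Qed.
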